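(* Let $A,B,A',B'$ be finite-dimensional physical systems with $|A||B|=|A'||B'|$, and let $\mathcal{U}(X)=UXU^*$ be a unitary channel from $AB$ to $A'B'$ that is Gibbs preserving, i.e. $\mathcal{U}(\gamma^{A}\otimes\gamma^{B})=\gamma^{A'}\otimes\gamma^{B'}$. Then the map defined for all states $\omega$ of $A$ by $$\mathcal{N}^{A\to A'}(\omega^A)\coloneqq \mathrm{Tr}_{B'}\left[\mathcal{U}^{AB\to A'B'}\left(\omega^A\otimes\gamma^B\right)\right]$$ is a thermal operation from $A$ to $A'$.
   Context: Every physical system $X$ is finite dimensional and has a Hamiltonian $H^X$ (a Hermitian, positive semidefinite operator); composite systems of non-interacting parts have Hamiltonian $H^{XY}=H^X\otimes I^Y+I^X\otimes H^Y$. A fixed inverse temperature $\beta>0$ is given, and the Gibbs state of $X$ is $\gamma^X=e^{-\beta H^X}/\mathrm{Tr}[e^{-\beta H^X}]$ (so $\gamma^{XY}=\gamma^X\otimes\gamma^Y$). A thermal operation from $A$ to $A'$ is a quantum channel (CPTP map) obtainable by composing the following three steps: (i) appending any system $C$ prepared in its Gibbs state $\gamma^C$; (ii) applying a unitary on a composite system that commutes with the total Hamiltonian of that composite system; (iii) tracing out (discarding) subsystems. *)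

From HB Require Import structures.
From mathcomp Require Import all_boot all_order all_algebra.
From mathcomp Require Import complex.
From mathcomp Require mxtens.
From mathcomp Require Import reals.
From mathcomp Require Import sequences.

Set Implicit Arguments.
Unset Strict Implicit.
Unset Printing Implicit Defensive.

Import Order.TTheory GRing.Theory Num.Theory.
Local Open Scope ring_scope.
Local Open Scope complex_scope.

Section Thermal.
Variable R : realType.
Local Notation C := R[i].

Definition adj m n (X : 'M[C]_(m, n)) : 'M[C]_(n, m) := (X ^t* )%sesqui.

Definition unitary_op m n (U : 'M[C]_(m, n)) : Prop :=
  U *m adj U = 1%:M /\ adj U *m U = 1%:M.

Definition psd n (X : 'M[C]_n) : Prop :=
  forall v : 'rV[C]_n, 0 <= (v *m X *m adj v) 0 0.

Definition is_state n (X : 'M[C]_n) : Prop :=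
  X \is hermsymmx /\ psd X /\ \tr X = 1.

(* tensor product (Kronecker product, index (i,k) |-> i * n + k) *)
Definition tens m n (X : 'M[C]_m) (Y : 'M[C]_n) : 'M[C]_(m * n) :=
  mxtens.tensmx X Y.

Local Notation idx := mxtens.mxtens_index.
Local Notation unidx := mxtens.mxtens_unindex.

Definition ptrace2 m n (X : 'M[C]_(m * n)) : 'M[C]_m :=
  \matrix_(i, j) \sum_(k < n) X (idx (i, k)) (idx (j, k)).

Definition ptrace1 m n (X : 'M[C]_(m * n)) : 'M[C]_n :=
  \matrix_(i, j) \sum_(k < m) X (idx (k, i)) (idx (k, j)).

(* relabelling of the factors of a composite system:
   X ⊗ Y  ~>  Y ⊗ X  and  (X ⊗ Y) ⊗ Z  ~>  X ⊗ (Y ⊗ Z) (and back) *)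
Definition swap_ix m n (k : 'I_(n * m)) : 'I_(m * n) :=
  idx ((unidx k).2, (unidx k).1).
Definition swapmx m n (X : 'M[C]_(m * n)) : 'M[C]_(n * m) :=
  \matrix_(i, j) X (swap_ix i) (swap_ix j).

Definition assoc_ix m n p (k : 'I_(m * (n * p))) : 'I_((m * n) * p) :=
  let: (x, yz) := unidx k in let: (y, z) := unidx yz in idx (idx (x, y), z).
Definition assocmx m n p (X : 'M[C]_((m * n) * p)) : 'M[C]_(m * (n * p)) :=
  \matrix_(i, j) X (assoc_ix i) (assoc_ix j).

Definition unassoc_ix m n p (k : 'I_((m * n) * p)) : 'I_(m * (n * p)) :=
  let: (xy, z) := unidx k in let: (x, y) := unidx xy in idx (x, idx (y, z)).
Definition unassocmx m n p (X : 'M[C]_(m * (n * p))) : 'M[C]_((m * n) * p) :=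
  \matrix_(i, j) X (unassoc_ix i) (unassoc_ix j).

Record hsys := HSys {
  hdim : nat;
  hdim_gt0 : (0 < hdim)%N;
  hmat : 'M[C]_hdim;
  hmat_herm : hmat \is hermsymmx;
  hmat_psd : psd hmat }.

Inductive sys := Atom of hsys | Pair of sys & sys.

Fixpoint dim (s : sys) : nat :=
  match s with Atom a => hdim a | Pair s t => (dim s * dim t)%N end.

Fixpoint ham (s : sys) : 'M[C]_(dim s) :=
  match s return 'M[C]_(dim s) with
  | Atom a => hmat a
  | Pair s t => tens (ham s) 1%:M + tens 1%:M (ham t)
  end.

Variable beta : R.

(* e^{-beta H} for a Hermitian H, by functional calculus on the spectral
   decomposition H = P^{-1} diag(d) P (P unitary, d real) *)
Definition expmbeta n (H : 'M[C]_n) : 'M[C]_n :=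
  let P := spectralmx H in
  let d := spectral_diag H in
  invmx P *m diag_mx (\row_i ((expR (- beta * @complex.Re R (d 0 i)))%:C)) *m P.

Definition gibbs n (H : 'M[C]_n) : 'M[C]_n :=
  (\tr (expmbeta H))^-1 *: expmbeta H.

Definition gibbs_of (s : sys) : 'M[C]_(dim s) := gibbs (ham s).

Unset Implicit Arguments.

(* elementary steps: (i) append a system in its Gibbs state,
   (ii) a unitary on a (composite) system commuting with its total
   Hamiltonian, (iii) trace out a subsystem; plus the bookkeeping
   identifications of a composite system with its reordered /
   rebracketed presentation. *)
Inductive step : forall s t : sys, ('M[C]_(dim s) -> 'M[C]_(dim t)) -> Prop :=
  | step_append (s c : sys) :
      step s (Pair s c) (fun X => tens X (gibbs_of c))
  | step_unitary (s : sys) (V : 'M[C]_(dim s)) :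
      unitary_op V -> V *m ham s = ham s *m V ->
      step s s (fun X => V *m X *m adj V)
  | step_trace2 (s t : sys) : step (Pair s t) s (@ptrace2 (dim s) (dim t))
  | step_trace1 (s t : sys) : step (Pair s t) t (@ptrace1 (dim s) (dim t))
  | step_swap (s t : sys) : step (Pair s t) (Pair t s) (@swapmx (dim s) (dim t))
  | step_assoc (s t u : sys) :
      step (Pair (Pair s t) u) (Pair s (Pair t u)) (@assocmx (dim s) (dim t) (dim u))
  | step_unassoc (s t u : sys) :
      step (Pair s (Pair t u)) (Pair (Pair s t) u) (@unassocmx (dim s) (dim t) (dim u)).

Inductive thermal_op : forall s t : sys, ('M[C]_(dim s) -> 'M[C]_(dim t)) -> Prop :=
  | thermal_id (s : sys) : thermal_op s s id
  | thermal_cons (s t u : sys) (f : 'M[C]_(dim s) -> 'M[C]_(dim t))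
      (g : 'M[C]_(dim t) -> 'M[C]_(dim u)) :
      thermal_op s t f -> step t u g -> thermal_op s u (g \o f).

Set Implicit Arguments.

End Thermal.

Arguments step {R} beta s t _.
Arguments thermal_op {R} beta s t _.

(* Gibbs states are functions of the Hamiltonians, so a unitary U mapping
   gamma^A ⊗ gamma^B to gamma^A' ⊗ gamma^B' intertwines H^AB with H^A'B' + c for
   some constant c.  The square matrix W = SWAP (U ⊗ U^* ) on AB ⊗ A'B' satisfies
   W (P ⊗ Q) W^* = U^* Q U ⊗ U P U^*, so conjugating H^AB ⊗ 1 + 1 ⊗ H^A'B' by W
   only introduces the shifts +c and -c, which cancel: W is an energy-preserving
   unitary.  Appending B, A', B' in their Gibbs states, applying W, and discarding
   AB and then B' sends omega to the B'-marginal of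
   Tr(U^* gamma^A'B' U) U (omega ⊗ gamma^B) U^* = U (omega ⊗ gamma^B) U^*. *)

From mathcomp Require Import all_boot all_order all_algebra.
From mathcomp Require Import complex mxtens.
From mathcomp Require Import reals sequences exp ring.

Set Implicit Arguments.
Unset Strict Implicit.
Unset Printing Implicit Defensive.

Import Order.TTheory GRing.Theory Num.Theory.
Local Open Scope ring_scope.
Local Open Scope complex_scope.

Section Matrices.
Variable R : realType.
Local Notation C := R[i].
Local Notation idx := mxtens_index.
Local Notation unidx := mxtens_unindex.

Lemma adj_mul m n p (X : 'M[C]_(m, n)) (Y : 'M[C]_(n, p)) :
  adj (X *m Y) = adj Y *m adj X.
Proof. by rewrite /adj trmx_mul map_mxM. Qed.

Lemma adjK m n (X : 'M[C]_(m, n)) : adj (adj X) = X.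
Proof. exact: trmxCK. Qed.

Lemma adj_tens m n p q (X : 'M[C]_(m, n)) (Y : 'M[C]_(p, q)) :
  adj (X *t Y) = adj X *t adj Y.
Proof. by apply/matrixP => i j; rewrite !mxE rmorphM. Qed.

Lemma unitary_conj_comm n (V H : 'M[C]_n) :
  unitary_op V -> V *m H *m adj V = H -> V *m H = H *m V.
Proof. by case=> _ VV1 VHV; rewrite -{2}VHV -mulmxA VV1 mulmx1. Qed.

Lemma mxtens_index_eq m n (a b : 'I_m * 'I_n) : (idx a == idx b) = (a == b).
Proof. exact: (can_eq (@mxtens_indexK m n)). Qed.

Lemma tensmx1 m n : (1%:M : 'M[C]_m) *t (1%:M : 'M[C]_n) = 1%:M.
Proof.
apply/matrixP => i j.
case: (mxtens_indexP i) => i1 i2; case: (mxtens_indexP j) => j1 j2.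
rewrite tensmxE !mxE mxtens_index_eq xpair_eqE.
by case: (i1 == j1); case: (i2 == j2); rewrite ?mulr1 ?mulr0.
Qed.

Lemma tensmxDl m n p q (X Y : 'M[C]_(m, n)) (Z : 'M[C]_(p, q)) :
  (X + Y) *t Z = X *t Z + Y *t Z.
Proof. by apply/matrixP => i j; rewrite !mxE mulrDl. Qed.

Lemma tensmxDr m n p q (X : 'M[C]_(m, n)) (Y Z : 'M[C]_(p, q)) :
  X *t (Y + Z) = X *t Y + X *t Z.
Proof. by apply/matrixP => i j; rewrite !mxE mulrDr. Qed.

Lemma tensmxZl m n p q (a : C) (X : 'M[C]_(m, n)) (Y : 'M[C]_(p, q)) :
  (a *: X) *t Y = a *: (X *t Y).
Proof. by apply/matrixP => i j; rewrite !mxE mulrA. Qed.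

Lemma tensmxZr m n p q (a : C) (X : 'M[C]_(m, n)) (Y : 'M[C]_(p, q)) :
  X *t (a *: Y) = a *: (X *t Y).
Proof. by apply/matrixP => i j; rewrite !mxE mulrCA. Qed.

Lemma mxtrace_tens m n (X : 'M[C]_m) (Y : 'M[C]_n) : \tr (X *t Y) = \tr X * \tr Y.
Proof.
rewrite /mxtrace mulr_sum; apply: eq_bigr => k _.
by case: (mxtens_indexP k) => a b; rewrite tensmxE mxtens_indexK.
Qed.

Lemma tens_diag_mx m n (a : 'rV[C]_m) (b : 'rV[C]_n) :
  diag_mx a *t diag_mx b =
  diag_mx (\row_k (a 0 (unidx k).1 * b 0 (unidx k).2)).
Proof.
apply/matrixP => i j.
case: (mxtens_indexP i) => a1 b1; case: (mxtens_indexP j) => a2 b2.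
rewrite tensmxE !mxE mxtens_indexK mxtens_index_eq xpair_eqE /=.
by case: (a1 == a2); case: (b1 == b2); rewrite ?mulr1n ?mulr0n ?mulr0 ?mul0r.
Qed.

Lemma ptrace1_tens m n (X : 'M[C]_m) (Y : 'M[C]_n) : ptrace1 (tens X Y) = \tr X *: Y.
Proof.
apply/matrixP => i j; rewrite !mxE /mxtrace mulr_suml.
by apply: eq_bigr => k _; rewrite tensmxE.
Qed.

Lemma assocmx_tens m n p (X : 'M[C]_m) (Y : 'M[C]_n) (Z : 'M[C]_p) :
  assocmx (tens (tens X Y) Z) = tens X (tens Y Z).
Proof.
apply/matrixP => i j.
case: (mxtens_indexP i) => a bc; case: (mxtens_indexP j) => a' bc'.
case: (mxtens_indexP bc) => b c; case: (mxtens_indexP bc') => b' c'.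
by rewrite mxE /assoc_ix !mxtens_indexK !tensmxE mulrA.
Qed.

Lemma diag_mx_intertwine m n (V : 'M[C]_(m, n)) (a : 'I_n -> C) (b : 'I_m -> C)
    (f : C -> C) :
  V *m diag_mx (\row_j a j) = diag_mx (\row_i b i) *m V ->
  V *m diag_mx (\row_j f (a j)) = diag_mx (\row_i f (b i)) *m V.
Proof.
move=> /matrixP Vab; apply/matrixP => i j; move: (Vab i j).
rewrite !mul_mx_diag !mul_diag_mx !mxE.
have [->|Vij_neq0] := eqVneq (V i j) 0; first by rewrite !mulr0 !mul0r.
by rewrite mulrC => /(mulIf Vij_neq0) ->; rewrite mulrC.
Qed.

Lemma conj_diag_intertwine m n (U : 'M[C]_(n, m)) (Q Q' : 'M[C]_m) (P P' : 'M[C]_n)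
    (a : 'I_m -> C) (b : 'I_n -> C) (f : C -> C) :
  Q *m Q' = 1%:M -> Q' *m Q = 1%:M -> P *m P' = 1%:M -> P' *m P = 1%:M ->
  U *m (Q' *m diag_mx (\row_i a i) *m Q) = P' *m diag_mx (\row_j b j) *m P *m U ->
  U *m (Q' *m diag_mx (\row_i f (a i)) *m Q) =
    P' *m diag_mx (\row_j f (b j)) *m P *m U.
Proof.
move=> QQ' Q'Q PP' P'P UAB.
set V := P *m U *m Q'.
have Vab : V *m diag_mx (\row_i a i) = diag_mx (\row_j b j) *m V.
  move/(congr1 (fun M => P *m M *m Q')): UAB.
  by rewrite !mulmxA -(mulmxA _ Q) QQ' mulmx1 PP' mul1mx => ->.
have -> : U = P' *m V *m Q.
  by rewrite /V !mulmxA P'P mul1mx -mulmxA Q'Q mulmx1.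
clearbody V.
rewrite !mulmxA -(mulmxA _ Q) QQ' mulmx1 -(mulmxA _ P) PP' mulmx1.
by rewrite -(mulmxA P') (diag_mx_intertwine f Vab) !mulmxA.
Qed.

Lemma conj_diag_shift m (Q Q' : 'M[C]_m) (h : 'I_m -> R) (c : R) :
  Q' *m Q = 1%:M ->
  Q' *m diag_mx (\row_k (h k + c)%:C) *m Q =
    Q' *m diag_mx (\row_k (h k)%:C) *m Q + (c%:C)%:M.
Proof.
move=> Q'Q.
have -> : diag_mx (\row_k (h k + c)%:C) = diag_mx (\row_k (h k)%:C) + (c%:C)%:M.
  by apply/matrixP => i j; rewrite !mxE rmorphD mulrnDl.
by rewrite mulmxDr mulmxDl mul_mx_scalar -scalemxAl Q'Q scalemx1.
Qed.

Definition bijmx a b (f : 'I_a -> 'I_b) : 'M[C]_(a, b) := \matrix_(i, j) (f i == j)%:R.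

Lemma bijmx_mulE a b p (f : 'I_a -> 'I_b) (M : 'M[C]_(b, p)) i j :
  (bijmx f *m M) i j = M (f i) j.
Proof.
rewrite mxE (bigD1 (f i)) //= mxE eqxx mul1r big1 ?addr0 // => k /negbTE nk.
by rewrite mxE eq_sym nk mul0r.
Qed.

Section Bijection.
Variables (a b : nat) (f : 'I_a -> 'I_b) (g : 'I_b -> 'I_a).
Hypotheses (fK : cancel f g) (gK : cancel g f).

Lemma mulmx_bijmxE p (M : 'M[C]_(p, a)) i j : (M *m bijmx f) i j = M i (g j).
Proof.
rewrite mxE (bigD1 (g j)) //= mxE gK eqxx mulr1 big1 ?addr0 // => k nk.
rewrite mxE; case: eqP => [fk|]; last by rewrite mulr0.
by case/eqP: nk; rewrite -fk fK.
Qed.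

Lemma adj_bijmx : adj (bijmx f) = bijmx g.
Proof.
apply/matrixP => i j; rewrite !mxE conjC_nat.
suff -> : (f j == i) = (g i == j) by [].
by apply/eqP/eqP => [<-|<-]; rewrite ?fK ?gK.
Qed.

Lemma bijmxK : bijmx f *m bijmx g = 1%:M.
Proof. by apply/matrixP => i j; rewrite bijmx_mulE !mxE fK. Qed.

End Bijection.

Lemma swap_ixE m n (a : 'I_m) (b : 'I_n) : swap_ix (idx (a, b)) = idx (b, a).
Proof. by rewrite /swap_ix mxtens_indexK. Qed.

Lemma swap_ixK m n : cancel (@swap_ix m n) (@swap_ix n m).
Proof. by move=> k; case: (mxtens_indexP k) => a b; rewrite !swap_ixE. Qed.

Lemma bijmx_swap_tens m n p q (X : 'M[C]_(m, n)) (Y : 'M[C]_(p, q)) :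
  bijmx (@swap_ix m p) *m (X *t Y) *m bijmx (@swap_ix q n) = Y *t X.
Proof.
apply/matrixP => i j; rewrite (mulmx_bijmxE (@swap_ixK _ _) (@swap_ixK _ _)) bijmx_mulE.
case: (mxtens_indexP i) => a b; case: (mxtens_indexP j) => a' b'.
by rewrite !swap_ixE !tensmxE mulrC.
Qed.

Section Twist.
Variables (n n' : nat) (U : 'M[C]_(n', n)).
Hypothesis U_unitary : unitary_op U.

Definition twistmx : 'M[C]_(n * n') := bijmx (@swap_ix n' n) *m (U *t adj U).

Lemma adj_twistmx : adj twistmx = (adj U *t U) *m bijmx (@swap_ix n n').
Proof.
by rewrite /twistmx adj_mul adj_tens adjK (adj_bijmx (@swap_ixK _ _) (@swap_ixK _ _)).
Qed.

Lemma twistmx_conj (P : 'M[C]_n) (Q : 'M[C]_n') :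
  twistmx *m (P *t Q) *m adj twistmx = (adj U *m Q *m U) *t (U *m P *m adj U).
Proof.
rewrite adj_twistmx /twistmx -(bijmx_swap_tens (U *m P *m adj U)) !mulmxA.
by congr (_ *m _); rewrite -!mulmxA !tensmx_mul !mulmxA.
Qed.

Lemma twistmx_unitary : unitary_op twistmx.
Proof.
have [UU1 U'U1] := U_unitary; split.
  by move: (twistmx_conj 1%:M 1%:M); rewrite !mulmx1 U'U1 UU1 !tensmx1 mulmx1.
rewrite adj_twistmx /twistmx mulmxA -(mulmxA _ _ (bijmx _)).
by rewrite (bijmxK (@swap_ixK _ _)) mulmx1 tensmx_mul U'U1 UU1 tensmx1.
Qed.

Lemma twistmx_comm (H1 : 'M[C]_n) (H2 : 'M[C]_n') (c : C) :
  U *m H1 = (H2 + c%:M) *m U ->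
  twistmx *m (tens H1 1%:M + tens 1%:M H2) = (tens H1 1%:M + tens 1%:M H2) *m twistmx.
Proof.
have [UU1 U'U1] := U_unitary; move=> UH1.
have UH1U : U *m H1 *m adj U = H2 + c%:M by rewrite UH1 -mulmxA UU1 mulmx1.
have U'H2U : adj U *m H2 *m U = H1 - c%:M.
  move/(congr1 (mulmx (adj U))): UH1; rewrite mulmxA U'U1 mul1mx mulmxDl mulmxDr.
  by rewrite mul_scalar_mx -scalemxAr U'U1 scalemx1 !mulmxA => ->; rewrite addrK.
apply: unitary_conj_comm; first exact: twistmx_unitary.
rewrite /tens mulmxDr mulmxDl !twistmx_conj UH1U U'H2U.
rewrite !mulmx1 U'U1 UU1 -!(scalemx1 _ c) tensmxDr tensmxDl -scaleNr.
by rewrite tensmxZr tensmxZl tensmx1 scaleNr addrACA subrr addr0 addrC.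
Qed.

End Twist.

End Matrices.

Section Gibbs.
Variables (R : realType) (beta : R).
Local Notation C := R[i].
Local Notation unidx := mxtens_unindex.

Definition scaled_gibbs n (H G : 'M[C]_n) : Prop :=
  exists (P P' : 'M[C]_n) (h : 'I_n -> R) (z : R),
  [/\ P *m P' = 1%:M, P' *m P = 1%:M, 0 < z,
      H = P' *m diag_mx (\row_i (h i)%:C) *m P &
      G = P' *m diag_mx (\row_i (expR (- beta * h i) / z)%:C) *m P].

Lemma sum_expR_gt0 n (h : 'I_n -> R) : (0 < n)%N -> 0 < \sum_i expR (h i).
Proof.
move=> n_gt0; rewrite (bigD1 (Ordinal n_gt0)) //= ltr_wpDr ?expR_gt0 //.
by apply: sumr_ge0 => i _; exact: expR_ge0.
Qed.

Lemma mxtrace_expmbeta n (H : 'M[C]_n) :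
  \tr (expmbeta beta H) =
    (\sum_i expR (- beta * complex.Re (spectral_diag H 0 i)))%:C.
Proof.
rewrite /expmbeta mxtrace_mulC mulmxA mulmxV ?spectral_unit // mul1mx mxtrace_diag.
by rewrite rmorph_sum; apply: eq_bigr => i _; rewrite mxE.
Qed.

Lemma mxtrace_gibbs n (H : 'M[C]_n) : (0 < n)%N -> \tr (gibbs beta H) = 1.
Proof.
move=> n_gt0; rewrite /gibbs mxtraceZ mulVf // mxtrace_expmbeta.
by rewrite (inj_eq (@complexI _)) gt_eqF ?sum_expR_gt0.
Qed.

Lemma scaled_gibbs_gibbs n (H : 'M[C]_n) :
  (0 < n)%N -> H \is hermsymmx -> scaled_gibbs H (gibbs beta H).
Proof.
move=> n_gt0 H_herm; set P := spectralmx H; set d := spectral_diag H.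
have P_unit : P \in unitmx by exact: spectral_unit.
have d_real i : (complex.Re (d 0 i))%:C = d 0 i.
  by apply: RRe_real; move/mxOverP: (hermitian_spectral_diag_real H_herm).
set z := \sum_i expR (- beta * complex.Re (d 0 i)).
exists P, (invmx P), (fun i => complex.Re (d 0 i)), z; split.
- exact: mulmxV P_unit.
- exact: mulVmx P_unit.
- exact: sum_expR_gt0.
- have /orthomx_spectralP {1}-> := hermitian_normalmx H_herm.
  by congr (_ *m diag_mx _ *m _); apply/matrixP => i j; rewrite (ord1 i) !mxE d_real.
- rewrite /gibbs mxtrace_expmbeta /expmbeta -/P -/d -/z scalemxAl scalemxAr.
  congr (_ *m _ *m _); apply/matrixP => i j.
  by rewrite !mxE mulrnAr rmorphM fmorphV mulrC.
Qed.

Lemma scaled_gibbs_tens m n (H1 G1 : 'M[C]_m) (H2 G2 : 'M[C]_n) :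
  scaled_gibbs H1 G1 -> scaled_gibbs H2 G2 ->
  scaled_gibbs (tens H1 1%:M + tens 1%:M H2) (tens G1 G2).
Proof.
move=> [P1 [P1' [h1 [z1 [PP1 P'P1 z1_gt0 -> ->]]]]].
move=> [P2 [P2' [h2 [z2 [PP2 P'P2 z2_gt0 -> ->]]]]].
exists (P1 *t P2), (P1' *t P2'),
  (fun k => h1 (unidx k).1 + h2 (unidx k).2), (z1 * z2).
rewrite /tens; split.
- by rewrite tensmx_mul PP1 PP2 tensmx1.
- by rewrite tensmx_mul P'P1 P'P2 tensmx1.
- exact: mulr_gt0.
- set D1 := diag_mx _; set D2 := diag_mx _.
  have -> : (P1' *m D1 *m P1) *t 1%:M = (P1' *t P2') *m (D1 *t 1%:M) *m (P1 *t P2).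
    by rewrite !tensmx_mul mulmx1 P'P2.
  have -> : 1%:M *t (P2' *m D2 *m P2) = (P1' *t P2') *m (1%:M *t D2) *m (P1 *t P2).
    by rewrite !tensmx_mul mulmx1 P'P1.
  rewrite -mulmxDl -mulmxDr /D1 /D2 -!diag_const_mx !tens_diag_mx -raddfD /=.
  congr (_ *m diag_mx _ *m _); apply/matrixP => i k.
  by rewrite !mxE rmorphD mulr1 mul1r.
- rewrite -!tensmx_mul tens_diag_mx; congr (_ *m diag_mx _ *m _).
  apply/matrixP => i k; rewrite !mxE -rmorphM.
  by rewrite mulf_div mulrDr expRD.
Qed.

(* Applying [w |-> - ln (Re w) / beta] to the spectra of [G1] and [G2] recovers
   [H1] and [H2], shifted by the constants [ln z / beta]. *)
Lemma scaled_gibbs_intertwine m n (U : 'M[C]_(n, m)) (H1 G1 : 'M[C]_m)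
    (H2 G2 : 'M[C]_n) :
  beta != 0 -> scaled_gibbs H1 G1 -> scaled_gibbs H2 G2 ->
  U *m G1 = G2 *m U -> exists c : C, U *m H1 = (H2 + c%:M) *m U.
Proof.
move=> beta_neq0 [Q [Q' [h1 [z1 [QQ' Q'Q z1_gt0 -> ->]]]]].
move=> [P [P' [h2 [z2 [PP' P'P z2_gt0 -> ->]]]]] UG.
pose f (w : C) := (- ln (complex.Re w) / beta)%:C.
have f_gibbs z (h : 'I_ _ -> R) : 0 < z ->
    \row_i f (expR (- beta * h i) / z)%:C = \row_i (h i + ln z / beta)%:C.
  move=> z_gt0; apply/rowP => i; rewrite !mxE /f /=.
  by rewrite ln_div ?expRK ?posrE ?expR_gt0 //; congr _%:C; field.
have := conj_diag_intertwine f QQ' Q'Q PP' P'P UG.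
rewrite !f_gibbs // !conj_diag_shift // mulmxDr mulmxDl mul_mx_scalar mul_scalar_mx.
move=> UH; exists ((ln z2 / beta)%:C - (ln z1 / beta)%:C).
apply: (addIr ((ln z1 / beta)%:C *: U)); rewrite UH.
by rewrite mulmxDl mul_scalar_mx scalerBl -addrA addrNK.
Qed.

Lemma thermal_op_twist (s b a' b' : sys R) (U : 'M[C]_(dim a' * dim b', dim s * dim b))
    (c : C) :
  unitary_op U -> U *m ham (Pair s b) = (ham (Pair a' b') + c%:M) *m U ->
  \tr (tens (gibbs_of beta a') (gibbs_of beta b')) = 1 ->
  exists N, thermal_op beta s a' N /\
    forall X, N X = ptrace2 (U *m tens X (gibbs_of beta b) *m adj U).
Proof.
move=> U_unitary UH trG; have [UU1 _] := U_unitary.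
have W_unitary := twistmx_unitary U_unitary.
have W_comm := twistmx_comm U_unitary UH.
set TC := @thermal_cons R beta.
eexists; split.
  apply: (TC _ _ _ _ _ _ (step_trace2 R beta a' b')).
  apply: (TC _ _ _ _ _ _ (step_trace1 R beta (Pair s b) (Pair a' b'))).
  apply: (TC _ _ _ _ _ _
    (step_unitary R beta (Pair (Pair s b) (Pair a' b')) _ W_unitary W_comm)).
  apply: (TC _ _ _ _ _ _ (step_assoc R beta (Pair s b) a' b')).
  apply: (TC _ _ _ _ _ _ (step_append R beta _ b')).
  apply: (TC _ _ _ _ _ _ (step_append R beta _ a')).
  apply: (TC _ _ _ _ _ _ (step_append R beta s b)).
  exact: thermal_id.
move=> X /=; rewrite assocmx_tens twistmx_conj ptrace1_tens.
by rewrite mxtrace_mulC mulmxA UU1 mul1mx trG scale1r.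
Qed.

End Gibbs.

Theorem lemma1 (R : realType) (beta : R) (hbeta : 0 < beta)
  (A B A' B' : hsys R)
  (hdimAB : (hdim A * hdim B = hdim A' * hdim B')%N)
  (U : 'M[R[i]]_(hdim A' * hdim B', hdim A * hdim B))
  (hU : unitary_op U)
  (hGibbs : U *m tens (gibbs_of beta (Atom A)) (gibbs_of beta (Atom B)) *m adj U
            = tens (gibbs_of beta (Atom A')) (gibbs_of beta (Atom B'))) :
  exists N : 'M[R[i]]_(hdim A) -> 'M[R[i]]_(hdim A'),
    thermal_op beta (Atom A) (Atom A') N /\
    forall omega : 'M[R[i]]_(hdim A), is_state omega ->
      N omega = ptrace2 (U *m tens omega (gibbs_of beta (Atom B)) *m adj U).
Proof.
have [_ U'U1] := hU.
have gibbs_atom (X : hsys R) := scaled_gibbs_gibbs beta (hdim_gt0 X) (hmat_herm X).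
have UG : U *m tens (gibbs_of beta (Atom A)) (gibbs_of beta (Atom B)) =
          tens (gibbs_of beta (Atom A')) (gibbs_of beta (Atom B')) *m U.
  by rewrite -hGibbs -(mulmxA _ (adj U)) U'U1 mulmx1.
have [c UH] := scaled_gibbs_intertwine (lt0r_neq0 hbeta)
  (scaled_gibbs_tens (gibbs_atom A) (gibbs_atom B))
  (scaled_gibbs_tens (gibbs_atom A') (gibbs_atom B')) UG.
have trG : \tr (tens (gibbs_of beta (Atom A')) (gibbs_of beta (Atom B'))) = 1.
  by rewrite mxtrace_tens !mxtrace_gibbs ?hdim_gt0 ?mulr1.
have [N [N_thermal N_E]] :=
  @thermal_op_twist _ beta (Atom A) (Atom B) (Atom A') (Atom B') U c hU UH trG.
by exists N; split=> // omega _.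
Qed.
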